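(* Let $N\ge2$ and $\mathbf x=(x_0,\dots,x_{N-1})\in\mathbb{C}^N$ with $x_0\neq0$ and $\operatorname{Re}x_0\neq0$; put $\sigma=\operatorname{sign}(\operatorname{Re}x_0)$ and $s=x_0/|x_0|$. Let $H_{\mathbf T},H_{\mathbf M},H_{\mathbf G}$ be the $\mathbf T$-, $\mathbf M$-, $\mathbf G$-type DsiHTs generated by $\mathbf x$. Then $$H_{\mathbf T}=\operatorname{diag}(\sigma,\ \sigma s,\ 1,\dots,1)\,H_{\mathbf M},\qquad H_{\mathbf G}=\operatorname{diag}(s,\ 1,\dots,1)\,H_{\mathbf M}.$$ In particular, rows $2,\dots,N-1$ of $H_{\mathbf T}$, $H_{\mathbf M}$ and $H_{\mathbf G}$ coincide, so $H_{\mathbf T}$ and $H_{\mathbf G}$ differ at most in their first two rows (rows $0$ and $1$), and $H_{\mathbf T}$ and $H_{\mathbf M}$ differ at most in rows $0$ and $1$ (only in row $1$ when $\operatorname{Re}x_0>0$).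
   Context: For $a,b\in\mathbb{C}$ and $n=\sqrt{|a|^2+|b|^2}$: $\mathbf{T}(a,b)=\frac{\operatorname{sign}(\operatorname{Re} a)}{n}\begin{bmatrix}\bar a & \bar b\\ -b & a\end{bmatrix}$ (for $\operatorname{Re}a\ne0$); $\mathbf{M}(a,b)=\frac{1}{n}\begin{bmatrix}\bar a & \bar b\\ -b\,\bar a/|a| & |a|\end{bmatrix}$ and $\mathbf{G}(a,b)=\frac{1}{n}\begin{bmatrix}|a| & (a/|a|)\bar b\\ -b\,\bar a/|a| & |a|\end{bmatrix}$ (for $a\neq0$). For a $2\times2$ matrix $B$, $B^{[p,q]}$ is the $N\times N$ matrix acting as $B$ on coordinates $(p,q)$ and as identity elsewhere. For $\mathbf Y\in\{\mathbf T,\mathbf M,\mathbf G\}$, the $\mathbf Y$-type DsiHT (natural path) generated by $\mathbf x$ is defined by: $a^{(0)}=x_0$; for $k=1,\dots,N-1$, $B_k=\mathbf Y(a^{(k-1)},x_k)$ and $a^{(k)}$ is the first component of $B_k(a^{(k-1)},x_k)^T$; $H_{\mathbf Y}=B_{N-1}^{[0,N-1]}\cdots B_1^{[0,1]}$. (Under the hypotheses all $B_k$ are well defined.) $\operatorname{sign}(t)\in\{\pm1\}$ is the sign of a nonzero real $t$. *)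

From HB Require Import structures.
From mathcomp Require Import all_boot all_order all_algebra.
Set Implicit Arguments. Unset Strict Implicit. Unset Printing Implicit Defensive.
Import Order.TTheory GRing.Theory Num.Theory.
Local Open Scope ring_scope.

Section DsiHT.
Variable C : numClosedFieldType.

Definition nrm2 (a b : C) : C := sqrtC (`|a| ^+ 2 + `|b| ^+ 2).

Definition sgnRe (a : C) : C := Num.sg ('Re a).

Definition mx2 (a00 a01 a10 a11 : C) : 'M[C]_2 :=
  \matrix_(i < 2, j < 2)
     if (i == 0 :> nat) then (if (j == 0 :> nat) then a00 else a01)
     else (if (j == 0 :> nat) then a10 else a11).

Definition Tmx (a b : C) : 'M[C]_2 :=
  (sgnRe a / nrm2 a b) *: mx2 a^* b^* (- b) a.

Definition Mmx (a b : C) : 'M[C]_2 :=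
  (nrm2 a b)^-1 *: mx2 a^* b^* (- b * a^* / `|a|) `|a|.

Definition Gmx (a b : C) : 'M[C]_2 :=
  (nrm2 a b)^-1 *: mx2 `|a| ((a / `|a|) * b^*) (- b * a^* / `|a|) `|a|.

(* B^{[p,q]} : acts as B on coordinates (p,q), identity elsewhere *)
Definition embed2 (N : nat) (B : 'M[C]_2) (p q : nat) : 'M[C]_N :=
  \matrix_(i < N, j < N)
    if (i == p :> nat) then
      (if (j == p :> nat) then B 0 0 else if (j == q :> nat) then B 0 1 else 0)
    else if (i == q :> nat) then
      (if (j == p :> nat) then B 1 0 else if (j == q :> nat) then B 1 1 else 0)
    else (i == j)%:R.

(* entries of x as a function of a natural index (0 outside range) *)
Definition xat (N : nat) (x : 'rV[C]_N) (k : nat) : C :=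
  if insub k is Some i then x 0 i else 0.

Fixpoint acc (Y : C -> C -> 'M[C]_2) (N : nat) (x : 'rV[C]_N) (k : nat) : C :=
  match k with
  | 0 => xat x 0
  | k'.+1 =>
      let a := acc Y x k' in
      let b := xat x k'.+1 in
      let B := Y a b in B 0 0 * a + B 0 1 * b
  end.

Definition Bk (Y : C -> C -> 'M[C]_2) (N : nat) (x : 'rV[C]_N) (k : nat)
  : 'M[C]_2 := Y (acc Y x k.-1) (xat x k).

Fixpoint Hpart (Y : C -> C -> 'M[C]_2) (N : nat) (x : 'rV[C]_N) (k : nat)
  : 'M[C]_N :=
  match k with
  | 0 => 1%:M
  | k'.+1 => embed2 N (Bk Y x k'.+1) 0 k'.+1 *m Hpart Y x k'
  end.

Definition DsiHT (Y : C -> C -> 'M[C]_2) (N : nat) (x : 'rV[C]_N) : 'M[C]_N :=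
  Hpart Y x N.-1.

Definition diagN (N : nat) (d0 d1 : C) : 'M[C]_N :=
  diag_mx (\row_(i < N) if (i == 0 :> nat) then d0
                        else if (i == 1 :> nat) then d1 else 1).
End DsiHT.

From HB Require Import structures.
From mathcomp Require Import all_boot all_order all_algebra.
From mathcomp Require Import ring.
Import Order.TTheory GRing.Theory Num.Theory.
Set Implicit Arguments. Unset Strict Implicit. Unset Printing Implicit Defensive.
Local Open Scope ring_scope.

(* The three transforms are products of embedded 2x2 blocks B_k^[0,k] built
   from the same data, and the M-type one serves as reference: its pivots
   a^(k) (k >= 1) are the positive reals n(a^(k-1), x_k).  A direct 2x2
   computation shows that at the first step T and G equal M up to a left
   diagonal factor, diag(sigma, sigma s) resp. diag(s, 1), while at every
   later step, where the pivot of T (resp. G) is sigma (resp. s) times the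
   positive M-pivot, the T- (resp. G-) block is the M-block conjugated by
   diag(sigma, 1) (resp. diag(s, 1)).  A general transfer principle then
   pushes the diagonal factor through the whole product by induction:
   H_T = diagN(sigma, sigma s) H_M and H_G = diagN(s, 1) H_M.  The statements
   on rows follow since left multiplication by a diagonal matrix scales rows. *)

Section TwoByTwo.
Variable C : numClosedFieldType.
Implicit Types a b c d e f g h u v w : C.

Definition diag2 u v : 'M[C]_2 := mx2 u 0 0 v.

Lemma mx2_eta (A : 'M[C]_2) : A = mx2 (A 0 0) (A 0 1) (A 1 0) (A 1 1).
Proof.
apply/matrixP=> i j; rewrite !mxE.
by case: i => [[|[|//]] ?]; case: j => [[|[|//]] ?]; congr (A _ _); exact: val_inj.
Qed.

Lemma mx2_inj a b c d a' b' c' d' :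
  mx2 a b c d = mx2 a' b' c' d' -> [/\ a = a', b = b', c = c' & d = d'].
Proof.
move=> eqA; have entry i j : mx2 a b c d i j = mx2 a' b' c' d' i j by rewrite eqA.
by split; [move: (entry 0 0) | move: (entry 0 1) | move: (entry 1 0) | move: (entry 1 1)];
  rewrite !mxE.
Qed.

Lemma scale_mx2 k a b c d : k *: mx2 a b c d = mx2 (k * a) (k * b) (k * c) (k * d).
Proof. by apply/matrixP=> i j; rewrite !mxE; case: (_ == _); case: (_ == _). Qed.

Lemma mul_mx2 a b c d e f g h :
  mx2 a b c d *m mx2 e f g h =
  mx2 (a * e + b * g) (a * f + b * h) (c * e + d * g) (c * f + d * h).
Proof.
apply/matrixP=> i j; rewrite !mxE !big_ord_recr big_ord0 /= add0r !mxE /=.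
by case: (_ == _); case: (_ == _).
Qed.

Lemma diag2_11 : diag2 1 1 = 1%:M.
Proof.
apply/matrixP=> i j; rewrite !mxE.
by case: i => [[|[|//]] ?]; case: j => [[|[|//]] ?].
Qed.

(* If A diag(u,1) = diag(w,v) B, then applying the first row of A to (u a, b)
   gives w times the first row of B applied to (a, b): this transports the
   pivot a^(k) from one factorization to the other. *)
Lemma first_row_twist (A B : 'M[C]_2) (u v w a b : C) :
  A *m diag2 u 1 = diag2 w v *m B ->
  A 0 0 * (u * a) + A 0 1 * b = w * (B 0 0 * a + B 0 1 * b).
Proof.
rewrite [A]mx2_eta [B]mx2_eta /diag2 !mul_mx2.
case/mx2_inj; rewrite /mx2 !mxE /= !mulr0 !mul0r !addr0 !add0r mulr1 => e00 e01 _ _.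
by rewrite mulrA e00 mulrDr !mulrA e01.
Qed.

End TwoByTwo.

Section Rotations.
Variable C : numClosedFieldType.
Implicit Types a b r u : C.

Lemma nrm2_gt0 a b : a != 0 -> 0 < nrm2 a b.
Proof.
move=> a0; rewrite /nrm2 sqrtC_gt0 ltr_pwDl ?exprn_ge0 //.
by rewrite exprn_gt0 // normr_gt0.
Qed.

Lemma nrm2_sq a b : nrm2 a b ^+ 2 = `|a| ^+ 2 + `|b| ^+ 2.
Proof. exact: sqrtCK. Qed.

Lemma nrm2_norm a a' b : `|a| = `|a'| -> nrm2 a b = nrm2 a' b.
Proof. by rewrite /nrm2 => ->. Qed.

Lemma conjCE a : a != 0 -> a^* = `|a| ^+ 2 / a.
Proof. by move=> a0; rewrite normCK mulrC mulKf. Qed.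

(* The first row of M(a,b) sends (a,b) to the real positive number n(a,b);
   hence the M-pivots a^(k), k >= 1, are positive reals. *)
Lemma Mmx_first_row a b : a != 0 -> Mmx a b 0 0 * a + Mmx a b 0 1 * b = nrm2 a b.
Proof.
move=> a0; have n0 : nrm2 a b != 0 by rewrite gt_eqF ?nrm2_gt0.
have nb : `|b| ^+ 2 = nrm2 a b ^+ 2 - `|a| ^+ 2 by rewrite nrm2_sq; ring.
by rewrite /Mmx !mxE /= -!mulrA -!normCKC nb; field.
Qed.

Lemma Tmx_first a b : a != 0 ->
  Tmx a b = diag2 (sgnRe a) (sgnRe a * (a / `|a|)) *m Mmx a b.
Proof.
move=> a0; have n0 : nrm2 a b != 0 by rewrite gt_eqF ?nrm2_gt0.
have na0 : `|a| != 0 by rewrite normr_eq0.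
rewrite /Tmx /Mmx /diag2 !scale_mx2 mul_mx2 (conjCE a0).
by congr mx2; field; rewrite ?n0 ?na0 ?a0.
Qed.

Lemma Gmx_first a b : a != 0 -> Gmx a b = diag2 (a / `|a|) 1 *m Mmx a b.
Proof.
move=> a0; have n0 : nrm2 a b != 0 by rewrite gt_eqF ?nrm2_gt0.
have na0 : `|a| != 0 by rewrite normr_eq0.
rewrite /Gmx /Mmx /diag2 !scale_mx2 mul_mx2 (conjCE a0).
by congr mx2; field; rewrite ?n0 ?na0 ?a0.
Qed.

Lemma sgnRe_signed sigma r : sigma = 1 \/ sigma = -1 -> 0 < r -> sgnRe (sigma * r) = sigma.
Proof.
move=> hs r_gt0; have rR : r \is Num.real by rewrite gtr0_real.
rewrite /sgnRe; case: hs => ->; first by rewrite mul1r (Creal_ReP _ rR) gtr0_sg.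
have nR : - r \is Num.real by rewrite rpredN.
by rewrite mulN1r (Creal_ReP _ nR) ltr0_sg // oppr_lt0.
Qed.

(* At later steps the T-pivot is sigma r with r > 0, and T(sigma r, b) is
   M(r, b) conjugated by diag(sigma, 1). *)
Lemma Tmx_next sigma r b : sigma = 1 \/ sigma = -1 -> 0 < r ->
  Tmx (sigma * r) b *m diag2 sigma 1 = diag2 sigma 1 *m Mmx r b.
Proof.
move=> hs r_gt0; have r0 : r != 0 by rewrite gt_eqF.
have n0 : nrm2 r b != 0 by rewrite gt_eqF ?nrm2_gt0.
have rR : r \is Num.real by rewrite gtr0_real.
have nsigma : `|sigma| = 1 by case: hs => ->; rewrite ?normrN normr1.
rewrite /Tmx /Mmx /diag2 sgnRe_signed // (@nrm2_norm (sigma * r) r); last first.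
  by rewrite normrM nsigma mul1r.
rewrite !scale_mx2 !mul_mx2 (gtr0_norm r_gt0) rmorphM /= (conj_Creal rR).
by case: hs => ->; rewrite ?rmorph1 ?rmorphN1; congr mx2; field; rewrite ?n0 ?r0.
Qed.

(* At later steps the G-pivot is u r with |u| = 1, r > 0, and G(u r, b) is
   M(r, b) conjugated by diag(u, 1). *)
Lemma Gmx_next u r b : `|u| = 1 -> 0 < r ->
  Gmx (u * r) b *m diag2 u 1 = diag2 u 1 *m Mmx r b.
Proof.
move=> nu r_gt0; have r0 : r != 0 by rewrite gt_eqF.
have n0 : nrm2 r b != 0 by rewrite gt_eqF ?nrm2_gt0.
have rR : r \is Num.real by rewrite gtr0_real.
have u0 : u != 0 by rewrite -normr_eq0 nu oner_neq0.
have nur : `|u * r| = r by rewrite normrM nu mul1r gtr0_norm.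
rewrite /Gmx /Mmx /diag2 nur (@nrm2_norm (u * r) r); last by rewrite nur gtr0_norm.
rewrite !scale_mx2 !mul_mx2 (gtr0_norm r_gt0) rmorphM /= (conj_Creal rR) (conjCE u0) nu.
by congr mx2; field; rewrite ?n0 ?r0 ?u0.
Qed.

End Rotations.

Section Twist.
Variables (C : numClosedFieldType) (N : nat).

Definition diagf (f : nat -> C) : 'M[C]_N := diag_mx (\row_(i < N) f i).

Definition twist (d0 d1 : C) (i : nat) : C :=
  if i == 0%N then d0 else if i == 1%N then d1 else 1.

Lemma twist_ge2 (d0 d1 : C) (i : nat) : (2 <= i)%N -> twist d0 d1 i = 1.
Proof. by case: i => [|[|i]]. Qed.

Lemma diagNE (d0 d1 : C) : diagN N d0 d1 = diagf (twist d0 d1).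
Proof. by []. Qed.

Lemma diagf1 : diagf (fun=> 1) = 1%:M.
Proof. by apply/matrixP=> i j; rewrite !mxE. Qed.

Lemma row_diagf (f : nat -> C) (A : 'M[C]_N) (i : 'I_N) :
  row i (diagf f *m A) = f i *: row i A.
Proof. by apply/rowP=> j; rewrite mul_diag_mx !mxE. Qed.

Lemma embed2_diagf (k : nat) (A B : 'M[C]_2) (f g : nat -> C) :
  (0 < k)%N -> (forall i, i != 0%N -> i != k -> f i = g i) ->
  A *m diag2 (f 0%N) (f k) = diag2 (g 0%N) (g k) *m B ->
  embed2 N A 0 k *m diagf f = diagf g *m embed2 N B 0 k.
Proof.
move=> k_gt0 f_eq_g; rewrite [A]mx2_eta [B]mx2_eta /diag2 !mul_mx2.
case/mx2_inj; rewrite !mulr0 !mul0r !addr0 !add0r => e00 e01 e10 e11.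
apply/matrixP=> i j; rewrite mul_mx_diag mul_diag_mx /embed2 /mx2 !mxE /=.
have [-> | i0] := eqVneq (i : nat) 0%N.
  have [-> | j0] := eqVneq (j : nat) 0%N; first by [].
  by have [-> | jk] := eqVneq (j : nat) k; rewrite ?mul0r ?mulr0.
have [-> | ik] := eqVneq (i : nat) k.
  have [-> | j0] := eqVneq (j : nat) 0%N; first by [].
  by have [-> | jk] := eqVneq (j : nat) k; rewrite ?mul0r ?mulr0.
have [<- | ij] := eqVneq i j; last by rewrite mul0r mulr0.
by rewrite mul1r mulr1 f_eq_g.
Qed.

End Twist.

Lemma accS (C : numClosedFieldType) (Y : C -> C -> 'M[C]_2) N (x : 'rV[C]_N) k :
  acc Y x k.+1 = Y (acc Y x k) (xat x k.+1) 0 0 * acc Y x k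
                 + Y (acc Y x k) (xat x k.+1) 0 1 * xat x k.+1.
Proof. by []. Qed.

Lemma HpartS (C : numClosedFieldType) (Y : C -> C -> 'M[C]_2) N (x : 'rV[C]_N) k :
  Hpart Y x k.+1 = embed2 N (Bk Y x k.+1) 0 k.+1 *m Hpart Y x k.
Proof. by []. Qed.

Lemma BkS (C : numClosedFieldType) (Y : C -> C -> 'M[C]_2) N (x : 'rV[C]_N) k :
  Bk Y x k.+1 = Y (acc Y x k) (xat x k.+1).
Proof. by []. Qed.

Section Transfer.
Variables (C : numClosedFieldType) (N : nat) (x : 'rV[C]_N).
Hypothesis x0_neq0 : xat x 0 != 0.

Lemma accM_gt0 k : 0 < acc (@Mmx C) x k.+1.
Proof.
elim: k => [|k IHk]; first by rewrite accS Mmx_first_row // nrm2_gt0.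
have a_neq0 : acc (@Mmx C) x k.+1 != 0 by rewrite gt_eqF.
by rewrite accS Mmx_first_row // nrm2_gt0.
Qed.

Variables (Y : C -> C -> 'M[C]_2) (u v : C).
Hypothesis Y_first :
  Y (xat x 0) (xat x 1) = diag2 u v *m Mmx (xat x 0) (xat x 1).
Hypothesis Y_next : forall r b, 0 < r ->
  Y (u * r) b *m diag2 u 1 = diag2 u 1 *m Mmx r b.

Lemma acc_transfer k : acc Y x k.+1 = u * acc (@Mmx C) x k.+1.
Proof.
elim: k => [|k IHk].
  rewrite /=; have := @first_row_twist C _ _ 1 v u (xat x 0) (xat x 1).
  by rewrite mul1r; apply; rewrite Y_first diag2_11 mulmx1.
by rewrite accS IHk; apply: first_row_twist; apply: Y_next; apply: accM_gt0.
Qed.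

Lemma Hpart_transfer k : (k < N.-1)%N ->
  Hpart Y x k.+1 = diagN N u v *m Hpart (@Mmx C) x k.+1.
Proof.
rewrite diagNE; elim: k => [|k IHk] kN.
  rewrite !HpartS !BkS /= !mulmx1 -[LHS]mulmx1 -diagf1; apply: embed2_diagf => //.
    by move=> i /negbTE i0 /negbTE i1; rewrite /twist i0 i1.
  by rewrite Y_first diag2_11 mulmx1.
have step : embed2 N (Bk Y x k.+2) 0 k.+2 *m diagf N (twist u v)
    = diagf N (twist u v) *m embed2 N (Bk (@Mmx C) x k.+2) 0 k.+2.
  apply: embed2_diagf => //.
  by rewrite !BkS acc_transfer; apply: Y_next; apply: accM_gt0.
by rewrite HpartS IHk ?(ltnW kN) // mulmxA step -mulmxA.
Qed.

Lemma DsiHT_transfer : (2 <= N)%N -> DsiHT Y x = diagN N u v *m DsiHT (@Mmx C) x.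
Proof.
move=> N_ge2; rewrite /DsiHT.
case eN: N.-1 => [|n]; first by move: N_ge2; rewrite -ltn_predRL eN.
by apply: Hpart_transfer; rewrite eN.
Qed.

End Transfer.

Lemma sgRe_pm1 (C : numClosedFieldType) (z : C) : 'Re z != 0 ->
  Num.sg ('Re z) = 1 \/ Num.sg ('Re z) = -1.
Proof.
rewrite real_neqr_lt ?Creal_Re ?real0 // => /orP[Re_lt0 | Re_gt0].
- by right; rewrite ltr0_sg.
- by left; rewrite gtr0_sg.
Qed.

Theorem mainTheorem7 (C : numClosedFieldType) (N : nat) (hN : (2 <= N)%N)
  (x : 'rV[C]_N) :
  let x0 := xat x 0 in
  x0 != 0 -> 'Re x0 != 0 ->
  let sigma := Num.sg ('Re x0) in
  let s := x0 / `|x0| in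
  let HT := DsiHT (@Tmx C) x in
  let HM := DsiHT (@Mmx C) x in
  let HG := DsiHT (@Gmx C) x in
  [/\ HT = diagN N sigma (sigma * s) *m HM,
      HG = diagN N s 1 *m HM,
      (forall i : 'I_N, (2 <= i)%N ->
         row i HT = row i HM /\ row i HG = row i HM)
    & (0 < 'Re x0 ->
         forall i : 'I_N, i != 1%N :> nat -> row i HT = row i HM)].
Proof.
move=> x0 x0_neq0 Re_neq0 sigma s HT HM HG.
have sigma_pm1 : sigma = 1 \/ sigma = -1 := sgRe_pm1 Re_neq0.
have s_unit : `|s| = 1 by rewrite normf_div normr_id divff // normr_eq0.
have eT : HT = diagN N sigma (sigma * s) *m HM.
  apply: DsiHT_transfer hN => // [|r b r_gt0]; first exact: Tmx_first.
  exact: Tmx_next.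
have eG : HG = diagN N s 1 *m HM.
  apply: DsiHT_transfer hN => // [|r b r_gt0]; first exact: Gmx_first.
  exact: Gmx_next.
have row_twist d0 d1 i : row i (diagN N d0 d1 *m HM) = twist d0 d1 i *: row i HM.
  by rewrite diagNE row_diagf.
split=> // [i i_ge2 | Re_gt0 i i_neq1].
  by rewrite eT eG !row_twist !twist_ge2 // !scale1r.
have sigma1 : sigma = 1 by rewrite /sigma gtr0_sg.
by rewrite eT row_twist /twist (negbTE i_neq1) sigma1; case: ifP; rewrite scale1r.
Qed.
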